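(* Let $T$ be a primed tableau of shape $\lambda/\mu$ over $X'_k$, $1\le i\le k-1$, $j=i+1$, with $f_i(T)\ne 0$, and let $x,q$ be the boxes chosen in the definition of $f_i$. Then either $q=x$ and $f_i(T)$ is obtained from $T$ by replacing the entry $i$ in $x$ by $j$, or $q\ne x$ and $f_i(T)$ is obtained by replacing the $i$ in $x$ by $j'$ and a $j'$ in $q$ by $j$. Moreover, $f_i(T)$ is again a primed tableau of shape $\lambda/\mu$.
   Context: Primed tableaux: Fix $k$. $X'_k=\{1'<1<2'<2<\dots<k'<k\}$; moving one step up in this chain is ''increasing by a half unit'' (e.g. $i'\to i$, $i\to (i+1)'$). A primed tableau of (skew) shape $\lambda/\mu$ is a filling of the diagram (English convention; ''below'' = next row down) with letters of $X'_k$, rows and columns weakly increasing, at most one $i'$ per row and at most one $i$ per column, for every $i$. For a position $p$, $c(p)$ is its entry, with $c(p)=\infty$ if $p$ is not a box of $T$. The reading word of $T$ is the word of its unprimed entries, read row by row left to right, from the bottom row to the top row. Bracketing: fix $i$, $j=i+1$. In the subword of the reading word consisting of the letters $i$ and $j$, repeatedly pair (bracket) a letter $j$ with a letter $i$ occurring later such that no unbracketed letters lie between them, until the unbracketed letters form a word $i^aj^b$. Operator $f_i$: if there is no unbracketed $i$, $f_i(T)=0$. Otherwise let $x$ be the box of $T$ corresponding to the rightmost unbracketed $i$; $E_x$ the position immediately right of $x$, $S_x$ the position immediately below $x$. Choose a box $q$: (F1) if $c(E_x)\ge j$ and $c(S_x)>j$, $q=x$; (F2) if $c(E_x)=j'$,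 $q=E_x$; (F3) if $c(E_x)\ge j$ and $c(S_x)\in\{j',j\}$, take the maximal ribbon (connected skew strip) starting at $S_x$ and extending by steps South and/or West consisting only of boxes with entries $j$ or $j'$, and let $q$ be its Southwest-most box. Then $f_i(T)$ is obtained from $T$ by increasing $c(x)$ by a half unit and then increasing $c(q)$ by a half unit (so if $q=x$ the entry of $x$ increases by a full unit). *)

From mathcomp Require Import all_boot.
Set Implicit Arguments.
Unset Strict Implicit.
Unset Printing Implicit Defensive.

(* Letters of X'_k are encoded as naturals:  i' |-> 2i-1,  i |-> 2i
   (so 1' < 1 < 2' < 2 < ... < k' < k  is  1 < 2 < ... < 2k, and
   "increasing by a half unit" is adding 1).  Odd = primed, even = unprimed. *)
Definition pletter (i : nat) : nat := i.*2.-1.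
Definition uletter (i : nat) : nat := i.*2.

(* Positions (row, column), 0-indexed, English convention: row r+1 is below
   row r, column c+1 is to the right of column c. *)
Definition pos := (nat * nat)%type.

Definition skew_shape (la mu : seq nat) : Prop :=
  sorted geq la /\ sorted geq mu /\ (forall r, nth 0 mu r <= nth 0 la r).

Definition in_shape (la mu : seq nat) (p : pos) : bool :=
  (nth 0 mu p.1 <= p.2) && (p.2 < nth 0 la p.1).

(* A filling is a function pos -> nat; only its values on boxes matter. *)
Definition primed_tableau (k : nat) (la mu : seq nat) (T : pos -> nat) : Prop :=
  [/\ (forall p, in_shape la mu p -> 1 <= T p <= (uletter k)),
      (forall r c1 c2, c1 <= c2 -> in_shape la mu (r, c1) -> in_shape la mu (r, c2) ->
         T (r, c1) <= T (r, c2)),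
      (forall r1 r2 c, r1 <= r2 -> in_shape la mu (r1, c) -> in_shape la mu (r2, c) ->
         T (r1, c) <= T (r2, c)),
      (forall r c1 c2, in_shape la mu (r, c1) -> in_shape la mu (r, c2) ->
         odd (T (r, c1)) -> T (r, c1) = T (r, c2) -> c1 = c2)
    &
      (forall r1 r2 c, in_shape la mu (r1, c) -> in_shape la mu (r2, c) ->
         ~~ odd (T (r1, c)) -> T (r1, c) = T (r2, c) -> r1 = r2)].

(* c(p): the entry of p, or None (= infinity) if p is not a box. *)
Definition cval (la mu : seq nat) (T : pos -> nat) (p : pos) : option nat :=
  if in_shape la mu p then Some (T p) else None.
Definition cge (o : option nat) (n : nat) : bool :=
  if o is Some v then n <= v else true.
Definition cgt (o : option nat) (n : nat) : bool :=
  if o is Some v then n < v else true.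

Definition row_boxes (la mu : seq nat) (r : nat) : seq pos :=
  [seq (r, c) | c <- iota (nth 0 mu r) (nth 0 la r - nth 0 mu r)].

(* Boxes of the reading word: unprimed entries, rows from bottom to top,
   each row left to right. *)
Definition reading_boxes (la mu : seq nat) (T : pos -> nat) : seq pos :=
  [seq p <- flatten [seq row_boxes la mu r | r <- rev (iota 0 (size la))]
     | ~~ odd (T p)].

(* Bracketing (j = i+1 plays "(" and i plays ")"): scanning the reading word
   left to right, a j is pushed, an i is bracketed with the nearest
   unbracketed j to its left if any, otherwise it is unbracketed.  The state
   records the number of pending unbracketed j's and the last unbracketed i. *)
Definition bracket_step (i : nat) (T : pos -> nat) (st : nat * option pos) (p : pos) :=
  let: (o, cand) := st in
  if T p == uletter i.+1 then (o.+1, cand)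
  else if T p == uletter i then
    (if o is o'.+1 then (o', cand) else (0, Some p))
  else st.

Definition rightmost_free_i (i : nat) (la mu : seq nat) (T : pos -> nat) : option pos :=
  (foldl (bracket_step i T) (0, None) (reading_boxes la mu T)).2.

Definition is_jj (j : nat) (o : option nat) : bool :=
  (o == Some (pletter j)) || (o == Some (uletter j)).

Definition ribbon_step (la mu : seq nat) (T : pos -> nat) (j : nat) (p : pos) : pos :=
  let S := (p.1.+1, p.2) in
  if is_jj j (cval la mu T S) then S
  else if (0 < p.2) && is_jj j (cval la mu T (p.1, p.2.-1)) then (p.1, p.2.-1)
  else p.

(* Southwest-most box of the maximal ribbon starting at p (iterating more
   than the maximal possible ribbon length reaches the fixpoint). *)
Definition ribbon_end (la mu : seq nat) (T : pos -> nat) (j : nat) (p : pos) : pos :=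
  iter (size la + head 0 la) (ribbon_step la mu T j) p.

(* The box q of cases (F1), (F2), (F3); None if no case applies. *)
Definition choose_q (i : nat) (la mu : seq nat) (T : pos -> nat) (x : pos) : option pos :=
  let j := i.+1 in
  let E := (x.1, x.2.+1) in
  let S := (x.1.+1, x.2) in
  if cval la mu T E == Some (pletter j) then Some E
  else if cge (cval la mu T E) (uletter j) && is_jj j (cval la mu T S)
       then Some (ribbon_end la mu T j S)
  else if cge (cval la mu T E) (uletter j) && cgt (cval la mu T S) (uletter j)
       then Some x
  else None.

(* Increase the entry at p by a half unit. *)
Definition bump (T : pos -> nat) (p : pos) : pos -> nat :=
  fun z => if z == p then (T p).+1 else T z.

(* f_i(T); None stands for 0. *)
Definition f_op (i : nat) (la mu : seq nat) (T : pos -> nat) : option (pos -> nat) :=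
  match rightmost_free_i i la mu T with
  | None => None
  | Some x =>
      match choose_q i la mu T x with
      | None => None
      | Some q => Some (bump (bump T x) q)
      end
  end.

(* Since x is the rightmost unbracketed i, the letter read
      just after x is not an i (so the box East of x is not i), and every
      segment of the reading word that ends just before x contains at most
      as many j's as i's ([segment_balance]).
   2. Ribbons.  Following the ribbon of j/j' boxes from the box South of x,
      an invariant counting i's and j's along the reading word shows,
      together with 1., that the ribbon ends in a box q holding j' and that
      no j lies right of S_x in its row ([ribbon_end_spec]).
   3. Raising entries.  Raising a single entry keeps a primed tableau
      primed as long as the neighbours in its row and column allow it
      ([raise_tableau]); f_i(T) is obtained by one raise (case F1) or by
      raising q from j' to j and then x from i to j' (cases F2, F3). *)

From Pilot Require Import Defs.
From mathcomp Require Import all_boot zify.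
From Stdlib Require Import FunctionalExtensionality.
Set Implicit Arguments.
Unset Strict Implicit.
Unset Printing Implicit Defensive.

(* With j = i+1, the letters i, j', j are encoded by 2i, 2i+1, 2i+2. *)
Lemma uletterS i : uletter i.+1 = i.*2.+2.
Proof. by rewrite /uletter doubleS. Qed.

Lemma pletterS i : pletter i.+1 = i.*2.+1.
Proof. by rewrite /pletter doubleS. Qed.

Arguments bracket_step : simpl never.

Lemma bracket_push i (T : pos -> nat) o c p : T p = i.*2.+2 ->
  bracket_step i T (o, c) p = (o.+1, c).
Proof. by rewrite /bracket_step uletterS => ->; rewrite eqxx. Qed.

Lemma bracket_free i (T : pos -> nat) c p : T p = i.*2 ->
  bracket_step i T (0, c) p = (0, Some p).
Proof. by rewrite /bracket_step uletterS /uletter => ->; rewrite eqxx ifF //; lia. Qed.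

Lemma bracket_close i (T : pos -> nat) o c p : T p = i.*2 ->
  bracket_step i T (o.+1, c) p = (o, c).
Proof. by rewrite /bracket_step uletterS /uletter => ->; rewrite eqxx ifF //; lia. Qed.

Lemma bracket_skip i (T : pos -> nat) o c p : T p <> i.*2.+2 -> T p <> i.*2 ->
  bracket_step i T (o, c) p = (o, c).
Proof.
by rewrite /bracket_step uletterS /uletter => /eqP/negbTE -> /eqP/negbTE ->.
Qed.

Definition nb (T : pos -> nat) (v : nat) (s : seq pos) : nat :=
  count (fun z => T z == v) s.

Lemma nb_cat T v s1 s2 : nb T v (s1 ++ s2) = nb T v s1 + nb T v s2.
Proof. by rewrite /nb count_cat. Qed.

Lemma nb_cons T v z s : nb T v (z :: s) = (T z == v) + nb T v s.
Proof. by []. Qed.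

(* Every j read along s is pending at the end or closed by an i of s. *)
Lemma bracket_balance i (T : pos -> nat) s o c :
  o + nb T i.*2.+2 s <= (foldl (bracket_step i T) (o, c) s).1 + nb T i.*2 s.
Proof.
elim: s o c => [|p s IH] o c; first by [].
rewrite !nb_cons /=.
have [HJ|HJ] := eqVneq (T p) i.*2.+2.
  by rewrite bracket_push // HJ gtn_eqF //; have := IH o.+1 c; lia.
have [HI|HI] := eqVneq (T p) i.*2.
  case: o => [|o]; last by rewrite bracket_close //; have := IH o c; lia.
  by rewrite bracket_free //; have := IH 0 (Some p); lia.
rewrite bracket_skip; try exact/eqP.
by have := IH o c; lia.
Qed.

Lemma rcons_eq_cat_cons (A : Type) (v : seq A) p v1 p' v2 :
  rcons v p = v1 ++ p' :: v2 ->
  (v1 = v /\ p' = p /\ v2 = [::]) \/ exists v2', v = v1 ++ p' :: v2'.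
Proof.
case/lastP: v2 => [|v2' y]; first by rewrite cats1 => /rcons_inj [-> ->]; left.
rewrite -rcons_cons -rcons_cat => /rcons_inj [-> _]; right; exists v2'.
by [].
Qed.

Lemma last_free_split i (T : pos -> nat) w x :
  (foldl (bracket_step i T) (0, None) w).2 = Some x ->
  exists u v, w = u ++ x :: v /\ T x = i.*2 /\
    (foldl (bracket_step i T) (0, None) u).1 = 0 /\
    (forall v1 p v2, v = v1 ++ p :: v2 -> T p = i.*2 ->
       0 < (foldl (bracket_step i T) (0, None) (u ++ x :: v1)).1).
Proof.
elim/last_ind: w => [|w p IH] //=; rewrite foldl_rcons.
case E: (foldl (bracket_step i T) (0, None) w) => [o cand]; rewrite E /= in IH.
have keep : cand = Some x -> (T p = i.*2 -> 0 < o) ->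
   exists u v, rcons w p = u ++ x :: v /\ T x = i.*2 /\
    (foldl (bracket_step i T) (0, None) u).1 = 0 /\
    (forall v1 p0 v2, v = v1 ++ p0 :: v2 -> T p0 = i.*2 ->
       0 < (foldl (bracket_step i T) (0, None) (u ++ x :: v1)).1).
  move=> Hc Hp; have [u [v [Hw [Hx [Hu Hv]]]]] := IH Hc.
  exists u, (rcons v p); split; first by rewrite Hw rcons_cat.
  do 2!split=> //; move=> v1 p0 v2 Hs Hp0.
  case: (rcons_eq_cat_cons Hs) => [[Hv1 [Hp' _]] | [v2' Hv2']]; last exact: Hv Hv2' Hp0.
  by subst v1 p0; rewrite -Hw E; apply: Hp.
have [HJ|HJ] := eqVneq (T p) i.*2.+2.
  by rewrite bracket_push // => /= Hc; apply: keep => // HI; move: HJ; rewrite HI; lia.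
have [HI|HI] := eqVneq (T p) i.*2; last first.
  rewrite bracket_skip; try exact/eqP.
  by move=> Hc; apply: keep => // Ep; move: HI; rewrite Ep eqxx.
case: o E keep => [|o] E keep /=; last by rewrite bracket_close // => Hc; apply: keep.
rewrite bracket_free //= => -[<-]; exists w, [::]; rewrite cats1 E.
by do 3!split=> //; case.
Qed.

Definition row_seg (t d e : nat) : seq pos := [seq (t, c) | c <- iota d (e - d)].

Lemma row_boxesE la mu t : row_boxes la mu t = row_seg t (nth 0 mu t) (nth 0 la t).
Proof. by []. Qed.

Lemma row_seg_split t d m e : d <= m <= e -> row_seg t d e = row_seg t d m ++ row_seg t m e.
Proof.
move=> H; rewrite /row_seg -map_cat (_ : e - d = (m - d) + (e - m)) ?iotaD; last by lia.
by rewrite subnKC //; lia.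
Qed.

Lemma row_seg_cons t d e : d < e -> row_seg t d e = (t, d) :: row_seg t d.+1 e.
Proof. by move=> H; rewrite /row_seg -subnSK. Qed.

Lemma row_seg_rcons t d e : d < e -> row_seg t d e = rcons (row_seg t d e.-1) (t, e.-1).
Proof.
move=> H; rewrite (@row_seg_split t d e.-1 e) ?(@row_seg_cons t e.-1) -?cats1; try lia.
by rewrite /row_seg prednK ?subnn //; lia.
Qed.

Lemma mem_row_seg z t d e : z \in row_seg t d e -> z.1 = t /\ d <= z.2 < e.
Proof. by case/mapP=> c; rewrite mem_iota => /andP [H1 H2] ->; split=> //=; lia. Qed.

Lemma mem_rows la mu z l : z \in flatten [seq row_boxes la mu s | s <- l] ->
   z.1 \in l /\ in_shape la mu z.
Proof.
case/flattenP=> ? /mapP [s Hs ->]; rewrite row_boxesE => /mem_row_seg [H1 /andP [H2 H3]].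
by rewrite H1; split=> //; rewrite /in_shape H1; apply/andP; split.
Qed.

Lemma rev_iota_split m n t : m <= t < m + n ->
  rev (iota m n) = rev (iota t.+1 (m + n - t.+1)) ++ t :: rev (iota m (t - m)).
Proof.
move=> H; rewrite {1}(_ : n = (t - m) + (m + n - t.+1).+1); last by lia.
by rewrite iotaD rev_cat subnKC //= ?rev_cons ?cat_rcons //; lia.
Qed.

Definition all_boxes (la mu : seq nat) : seq pos :=
  flatten [seq row_boxes la mu s | s <- rev (iota 0 (size la))].

Lemma reading_boxesE la mu T : reading_boxes la mu T = [seq p <- all_boxes la mu | ~~ odd (T p)].
Proof. by []. Qed.

Definition rows_between (la mu : seq nat) (a b : nat) : seq pos :=
  flatten [seq row_boxes la mu s | s <- rev (iota a (b - a))].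

Lemma rows_betweenS la mu a t : a <= t ->
  rows_between la mu a t.+1 = row_boxes la mu t ++ rows_between la mu a t.
Proof.
move=> H; rewrite /rows_between subSn // -addn1 iotaD rev_cat /=.
by rewrite subnKC.
Qed.

Lemma rows_between_nil la mu a : rows_between la mu a a = [::].
Proof. by rewrite /rows_between subnn. Qed.

(* The stretch of the reading order from box (t, d) of a lower row t > r up
   to, but excluding, the box (r, c). *)
Definition segment (la mu : seq nat) (r c t d : nat) : seq pos :=
  row_seg t d (nth 0 la t) ++ rows_between la mu r.+1 t ++ row_seg r (nth 0 mu r) c.

Definition after_box (la mu : seq nat) (r c : nat) : seq pos :=
  row_seg r c.+1 (nth 0 la r) ++ flatten [seq row_boxes la mu s | s <- rev (iota 0 r)].

Lemma in_shape_size la mu a b : in_shape la mu (a, b) -> a < size la.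
Proof.
rewrite /in_shape /= => /andP [_ H]; case: (ltnP a (size la)) => // H2.
by move: H; rewrite nth_default.
Qed.

Lemma all_boxes_split la mu r c : in_shape la mu (r, c) ->
  exists A0, all_boxes la mu = (A0 ++ row_seg r (nth 0 mu r) c) ++ (r, c) :: after_box la mu r c /\
   (forall z, z \in A0 -> r < z.1).
Proof.
move=> Hx; have Hr := in_shape_size Hx; move: Hx; rewrite /in_shape /= => /andP [H1 H2].
rewrite /all_boxes (@rev_iota_split 0 (size la) r) ?map_cat ?flatten_cat /=; last by lia.
rewrite row_boxesE (@row_seg_split r (nth 0 mu r) c) ?(@row_seg_cons r c) ?subn0; try lia.
eexists; split; first by rewrite -!catA.
by move=> z /mem_rows [+ _]; rewrite mem_rev mem_iota => /andP [].
Qed.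

Lemma all_boxes_split_segment la mu r c t d : in_shape la mu (r, c) ->
  r < t < size la -> nth 0 mu t <= d <= nth 0 la t ->
  exists P, all_boxes la mu = P ++ segment la mu r c t d ++ (r, c) :: after_box la mu r c.
Proof.
rewrite /in_shape /= => /andP [H1 H2] Ht Hd.
rewrite /all_boxes (@rev_iota_split 0 (size la) r); last by lia.
rewrite (@rev_iota_split (r.+1) (0 + size la - r.+1) t); last by lia.
rewrite !map_cat !flatten_cat /= [row_boxes la mu t]row_boxesE (@row_seg_split t _ d) //.
rewrite [row_boxes la mu r]row_boxesE (@row_seg_split r (nth 0 mu r) c);
  rewrite ?(@row_seg_cons r c); try lia.
exists (flatten [seq row_boxes la mu s | s <- rev (iota t.+1 (r.+1 + (0 + size la - r.+1) - t.+1))]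
  ++ row_seg t (nth 0 mu t) d).
by rewrite /segment /rows_between /after_box subn0 -!catA.
Qed.

Lemma notin_around_box la mu r c A0 : (forall z, z \in A0 -> r < z.1) ->
  (r, c) \notin A0 ++ row_seg r (nth 0 mu r) c /\ (r, c) \notin after_box la mu r c.
Proof.
move=> HA0; rewrite !mem_cat !negb_or; split; apply/andP; split; apply/negP.
- by move/HA0 => /=; lia.
- by move/mem_row_seg => /=; lia.
- by move/mem_row_seg => /=; lia.
- by case/mem_rows => /=; rewrite mem_rev mem_iota; lia.
Qed.

Lemma notin_filter (A : eqType) (a : pred A) x s : x \notin s -> x \notin [seq y <- s | a y].
Proof. by apply: contra; rewrite mem_filter => /andP []. Qed.

Lemma cat_cons_uniq (A : eqType) (x : A) U V u v :
  U ++ x :: V = u ++ x :: v -> x \notin U -> x \notin V -> U = u /\ V = v.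
Proof.
elim: U u => [|y U IH] [|z u] //=.
- by case=> ->.
- by case=> -> -> _; rewrite mem_cat inE eqxx orbT.
- by case=> -> _; rewrite inE eqxx.
- case=> -> H; rewrite inE negb_or => /andP [_ HU] HV.
  by have [-> ->] := IH u H HU HV.
Qed.

Lemma rightmost_free_iP i la mu T x : rightmost_free_i i la mu T = Some x ->
  T x = uletter i /\ in_shape la mu x /\
  (forall A B, reading_boxes la mu T = A ++ x :: B -> x \notin A -> x \notin B ->
     (foldl (bracket_step i T) (0, None) A).1 = 0 /\
     (forall p B2, B = p :: B2 -> T p <> uletter i)).
Proof.
rewrite /rightmost_free_i => /last_free_split [u [v [Hw [Hx [Hu Hv]]]]].
split=> //; split.
  have : x \in reading_boxes la mu T by rewrite Hw mem_cat inE eqxx orbT.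
  by rewrite reading_boxesE mem_filter => /andP [_ /mem_rows []].
move=> A B HAB HA HB; have [-> ->] := cat_cons_uniq (etrans (esym HAB) Hw) HA HB.
split=> // p B2 HB2 Hp; have := Hv [::] p B2 HB2 Hp.
rewrite foldl_cat /=; case E: (foldl _ _ u) => [o cc].
by rewrite E /= in Hu; rewrite Hu bracket_free.
Qed.

Lemma east_of_free_not_i i la mu T r c : rightmost_free_i i la mu T = Some (r, c) ->
  in_shape la mu (r, c.+1) -> T (r, c.+1) <> uletter i.
Proof.
move=> Hf HE HEI; have [Hx [Hxs Hp]] := rightmost_free_iP Hf.
have [A0 [Hw HA0]] := all_boxes_split Hxs; have [HA HB] := @notin_around_box la mu r c A0 HA0.
have Hev : ~~ odd (T (r, c)) by rewrite Hx /uletter odd_double.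
have Hrw : reading_boxes la mu T = [seq p <- A0 ++ row_seg r (nth 0 mu r) c | ~~ odd (T p)] ++
    (r, c) :: [seq p <- after_box la mu r c | ~~ odd (T p)].
  by rewrite reading_boxesE Hw filter_cat /= Hev.
have [_ /(_ (r, c.+1))] := Hp _ _ Hrw (notin_filter _ HA) (notin_filter _ HB).
apply=> //; move: HE; rewrite /in_shape /= => /andP [_ HE].
by rewrite /after_box (@row_seg_cons r c.+1) //= HEI /uletter odd_double.
Qed.

(* Every segment of the reading order ending just before x contains at most
   as many j's as i's: otherwise a j would remain pending at x. *)
Lemma segment_balance i la mu T r c t d :
  rightmost_free_i i la mu T = Some (r, c) ->
  r < t < size la -> nth 0 mu t <= d <= nth 0 la t ->
  nb T i.*2.+2 (segment la mu r c t d) <= nb T i.*2 (segment la mu r c t d).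
Proof.
move=> Hf Ht Hd; have [Hx [Hxs Hp]] := rightmost_free_iP Hf.
have [A0 [HW HA0]] := all_boxes_split Hxs; have [HA HB] := @notin_around_box la mu r c A0 HA0.
have [P HP] := all_boxes_split_segment Hxs Ht Hd.
have [HAe _] := cat_cons_uniq (etrans (esym HW) (etrans HP (catA _ _ _))) HA HB.
have Hev : ~~ odd (T (r, c)) by rewrite Hx /uletter odd_double.
set S := segment la mu r c t d in HP HAe *.
have Hrw : reading_boxes la mu T = ([seq p <- P | ~~ odd (T p)] ++ [seq p <- S | ~~ odd (T p)])
     ++ (r, c) :: [seq p <- after_box la mu r c | ~~ odd (T p)].
  by rewrite reading_boxesE HP catA filter_cat (filter_cat _ P) /= Hev.
have HA' : (r, c) \notin [seq p <- P | ~~ odd (T p)] ++ [seq p <- S | ~~ odd (T p)].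
  by rewrite -filter_cat -HAe notin_filter.
have [H0 _] := Hp _ _ Hrw HA' (notin_filter _ HB).
rewrite foldl_cat in H0.
case E: (foldl (bracket_step i T) (0, None) [seq p <- P | ~~ odd (T p)]) => [o cc].
rewrite E in H0.
have := bracket_balance i T [seq p <- S | ~~ odd (T p)] o cc.
have even_eq v : ~~ odd v -> nb T v [seq p <- S | ~~ odd (T p)] = nb T v S.
  move=> Hv; rewrite /nb count_filter; apply: eq_count => p /=.
  by case: eqP => // ->; rewrite Hv.
by rewrite H0 !even_eq ?odd_double //=; lia.
Qed.

Lemma nb_segment_south la mu T v r c t d : r < t -> nth 0 mu t <= d <= nth 0 la t ->
  nb T v (segment la mu r c t.+1 d) = nb T v (row_seg t.+1 d (nth 0 la t.+1)) +
     nb T v (row_seg t (nth 0 mu t) d) + nb T v (segment la mu r c t d).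
Proof.
move=> Hr Hd; rewrite /segment rows_betweenS // row_boxesE (@row_seg_split t _ d) //.
by rewrite !nb_cat; lia.
Qed.

Lemma nb_segment_west la mu T v r c t d : 0 < d -> d.-1 < nth 0 la t ->
  nb T v (segment la mu r c t d.-1) = (T (t, d.-1) == v) + nb T v (segment la mu r c t d).
Proof. by move=> H1 H2; rewrite /segment (@row_seg_cons t d.-1) // prednK. Qed.

Lemma nb_row_seg_last T v t m e : nb T v (row_seg t m e) <= nb T v (row_seg t m e.-1) + 1.
Proof.
case: (ltnP m e) => H; first by rewrite (@row_seg_rcons t m e) // -cats1 nb_cat /=; lia.
by rewrite /row_seg (_ : e - m = 0) //; lia.
Qed.

Lemma in_shapeE la mu a b : in_shape la mu (a, b) = (nth 0 mu a <= b) && (b < nth 0 la a).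
Proof. by []. Qed.

Lemma sorted_geq_nth (s : seq nat) a b : sorted geq s -> a <= b -> nth 0 s b <= nth 0 s a.
Proof.
move=> Hs Hab; case: (ltnP b (size s)) => Hb; last by rewrite nth_default.
have Ha : a < size s by lia.
have geq_trans : transitive geq by move=> ? ? ? /= ? ?; lia.
exact: (sorted_leq_nth geq_trans (fun _ => leqnn _) 0 Hs).
Qed.

Section SkewShape.
Variables (la mu : seq nat).
Hypothesis Hsk : skew_shape la mu.

Lemma mu_mono a b : a <= b -> nth 0 mu b <= nth 0 mu a.
Proof. by case: Hsk => _ [Hm _]; apply: sorted_geq_nth. Qed.

Lemma la_mono a b : a <= b -> nth 0 la b <= nth 0 la a.
Proof. by case: Hsk => [Hl _]; apply: sorted_geq_nth. Qed.

Lemma in_shape_col r1 r2 r c : in_shape la mu (r1, c) ->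
  in_shape la mu (r2, c) -> r1 <= r <= r2 -> in_shape la mu (r, c).
Proof.
move=> H1 H2 /andP [Ha Hb]; have := mu_mono Ha; have := la_mono Hb.
by move: H1 H2; rewrite !in_shapeE => /andP [? ?] /andP [? ?] ? ?; apply/andP; lia.
Qed.

Lemma in_shape_below t c1 c2 c : in_shape la mu (t, c1) -> in_shape la mu (t.+1, c2) ->
  c1 <= c <= c2 -> in_shape la mu (t.+1, c).
Proof.
have := mu_mono (leqnSn t).
by rewrite !in_shapeE => ? /andP [? ?] /andP [? ?] ?; apply/andP; lia.
Qed.

End SkewShape.

Lemma in_shape_row la mu t c1 c2 c : in_shape la mu (t, c1) -> in_shape la mu (t, c2) ->
  c1 <= c <= c2 -> in_shape la mu (t, c).
Proof. by rewrite !in_shapeE => /andP [? ?] /andP [? ?] ?; apply/andP; lia. Qed.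

Section TableauAxioms.
Variables (k : nat) (la mu : seq nat) (T : pos -> nat).
Hypothesis Ht : primed_tableau k la mu T.

Lemma row_mono t c1 c2 : c1 <= c2 ->
  in_shape la mu (t, c1) -> in_shape la mu (t, c2) -> T (t, c1) <= T (t, c2).
Proof. by case: Ht => _ H _ _ _; apply: H. Qed.

Lemma col_mono r1 r2 c : r1 <= r2 ->
  in_shape la mu (r1, c) -> in_shape la mu (r2, c) -> T (r1, c) <= T (r2, c).
Proof. by case: Ht => _ _ H _ _; apply: H. Qed.

Lemma primed_row_unique t c1 c2 v : odd v ->
  in_shape la mu (t, c1) -> in_shape la mu (t, c2) ->
  T (t, c1) = v -> T (t, c2) = v -> c1 = c2.
Proof. by case: Ht => _ _ _ H _ Hv H1 H2 E1 E2; apply: (H t c1 c2 H1 H2); rewrite E1 ?E2. Qed.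

Lemma unprimed_col_unique r1 r2 c v : ~~ odd v ->
  in_shape la mu (r1, c) -> in_shape la mu (r2, c) ->
  T (r1, c) = v -> T (r2, c) = v -> r1 = r2.
Proof. by case: Ht => _ _ _ _ H Hv H1 H2 E1 E2; apply: (H r1 r2 c H1 H2); rewrite E1 ?E2. Qed.

Lemma nb_row_tail t d v : in_shape la mu (t, d) -> v < T (t, d) ->
  nb T v (row_seg t d (nth 0 la t)) = 0.
Proof.
move=> Hp Hv; apply/eqP; rewrite /nb eqn0Ngt -has_count; apply/hasPn.
move=> [a b] /mem_row_seg /= [-> /andP [H1 H2]].
have Hb : in_shape la mu (t, b) by move: Hp; rewrite !in_shapeE => /andP [? ?]; apply/andP; lia.
by have := row_mono H1 Hp Hb; apply/contraL => /eqP ->; lia.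
Qed.

End TableauAxioms.

Lemma even_double m : ~~ odd m.*2.
Proof. by rewrite odd_double. Qed.

Lemma even_doubleSS m : ~~ odd m.*2.+2.
Proof. by rewrite /= odd_double. Qed.

Lemma odd_doubleS m : odd m.*2.+1.
Proof. by rewrite /= odd_double. Qed.

Lemma iter_fixpoint (A : eqType) (f : A -> A) (phi : A -> nat) n p :
  (forall q, f q != q -> phi (f q) < phi q) -> phi p <= n -> f (iter n f p) = iter n f p.
Proof.
move=> Hdec; elim: n p => [|n IH] p Hp.
  by have [//|/Hdec] := eqVneq (f p) p; lia.
have [Hfix|Hmove] := eqVneq (f p) p; first by rewrite iter_fix.
by rewrite iterSr; apply: IH; have := Hdec _ Hmove; lia.
Qed.

Section Ribbon.
Variables (k : nat) (la mu : seq nat) (T : pos -> nat) (i : nat).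
Hypotheses (Hsk : skew_shape la mu) (Ht : primed_tableau k la mu T).

Definition jj (v : nat) : bool := (v == i.*2.+1) || (v == i.*2.+2).

(* No box of a j/j' ribbon has both a South and a West neighbour in it:
   the four entries would force two j' in a row or two j in a column. *)
Lemma no_jj_corner t d : 0 < d ->
  in_shape la mu (t, d) -> in_shape la mu (t.+1, d) -> in_shape la mu (t, d.-1) ->
  jj (T (t, d)) -> jj (T (t.+1, d)) -> jj (T (t, d.-1)) -> False.
Proof.
move=> Hd Hp HS HW; have HSW : in_shape la mu (t.+1, d.-1).
  by apply: (in_shape_below Hsk HW HS); lia.
have := row_mono Ht (leq_pred d) HW Hp; have := row_mono Ht (leq_pred d) HSW HS.
have := col_mono Ht (leqnSn t) HW HSW; have := col_mono Ht (leqnSn t) Hp HS.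
have := @primed_row_unique _ _ _ _ Ht t _ _ _ (odd_doubleS i) HW Hp.
have := @primed_row_unique _ _ _ _ Ht t.+1 _ _ _ (odd_doubleS i) HSW HS.
have := @unprimed_col_unique _ _ _ _ Ht t _ d _ (even_doubleSS i) Hp HS.
have := @unprimed_col_unique _ _ _ _ Ht t _ d.-1 _ (even_doubleSS i) HW HSW.
rewrite /jj; lia.
Qed.

Definition south_free (p : pos) : Prop :=
  in_shape la mu (p.1.+1, p.2) -> ~~ jj (T (p.1.+1, p.2)).
Definition west_free (p : pos) : Prop :=
  0 < p.2 -> in_shape la mu (p.1, p.2.-1) -> ~~ jj (T (p.1, p.2.-1)).

Lemma is_jjE p : is_jj i.+1 (cval la mu T p) = in_shape la mu p && jj (T p).
Proof. by rewrite /is_jj /cval pletterS uletterS /jj; case: (in_shape la mu p). Qed.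

Variant ribbon_step_spec (p : pos) : pos -> Prop :=
| RibbonSouth of in_shape la mu (p.1.+1, p.2) & jj (T (p.1.+1, p.2)) :
    ribbon_step_spec p (p.1.+1, p.2)
| RibbonWest of south_free p & 0 < p.2 & in_shape la mu (p.1, p.2.-1) & jj (T (p.1, p.2.-1)) :
    ribbon_step_spec p (p.1, p.2.-1)
| RibbonStop of south_free p & west_free p : ribbon_step_spec p p.

Lemma ribbon_stepP p : ribbon_step_spec p (ribbon_step la mu T i.+1 p).
Proof.
rewrite /ribbon_step !is_jjE.
case: ifP => [/andP [HS JS] | HS]; first exact: RibbonSouth.
have Hsouth : south_free p by move=> HS'; apply/negP => JS; move: HS; rewrite HS' JS.
case: ifP => [/and3P [Hd HW JW] | HW]; first exact: RibbonWest.
by apply: RibbonStop => // Hd HW'; apply/negP => JW; move: HW; rewrite Hd HW' JW.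
Qed.

(* Below a box (t, d) holding at most j whose West neighbour is not j or
   j', the row above holds no i left of column d: such an i would force a
   j or j' between it and (t, d) in row t. *)
Lemma no_i_above t d : 0 < t -> in_shape la mu (t, d) -> T (t, d) <= i.*2.+2 ->
  west_free (t, d) -> nb T i.*2 (row_seg t.-1 (nth 0 mu t.-1) d) = 0.
Proof.
move=> Ht0 Hp Hv Hwest; apply/eqP; rewrite /nb eqn0Ngt -has_count; apply/hasPn.
move=> [a b] /mem_row_seg /= [-> /andP [H1 H2]]; apply/negP => /eqP HI.
have Hm := mu_mono Hsk (leq_pred t); have Hl := la_mono Hsk (leq_pred t).
have [Hb Hb' HW] : [/\ in_shape la mu (t, b), in_shape la mu (t.-1, b) & in_shape la mu (t, d.-1)].
  by move: Hp; rewrite !in_shapeE => /andP [? ?]; split; apply/andP; lia.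
have := Hwest (leq_ltn_trans (leq0n _) H2) HW.
have := row_mono Ht (leq_pred d) HW Hp; have := row_mono Ht (_ : b <= d.-1) Hb HW.
have := col_mono Ht (leq_pred t) Hb' Hb.
have := @unprimed_col_unique _ _ _ _ Ht t.-1 t b _ (even_double i) Hb' Hb HI.
by rewrite /= /jj; lia.
Qed.

Variables (r c : nat).

(* Invariant along the ribbon started at (r+1, c), the box South of
   x = (r, c): p is a ribbon box and, counting along the segment from p to
   x, the i's plus [T p = j] plus X are at most the j's plus the i's of the
   row above p left of p.  X is the number of j's right of (r+1, c). *)
Definition ribbon_inv (X : nat) (p : pos) : Prop :=
  [/\ r < p.1, in_shape la mu p, jj (T p) &
    nb T i.*2 (segment la mu r c p.1 p.2) + (T p == i.*2.+2) + X <=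
    nb T i.*2.+2 (segment la mu r c p.1 p.2) + nb T i.*2 (row_seg p.1.-1 (nth 0 mu p.1.-1) p.2)].

Lemma ribbon_inv_init : in_shape la mu (r.+1, c) -> jj (T (r.+1, c)) ->
  ribbon_inv (nb T i.*2.+2 (row_seg r.+1 c.+1 (nth 0 la r.+1))) (r.+1, c).
Proof.
move=> HS JS; split=> //=; rewrite /segment rows_between_nil /= !nb_cat.
have Hc : c < nth 0 la r.+1 by move: HS; rewrite in_shapeE => /andP [].
rewrite (nb_row_tail Ht HS (_ : i.*2 < _)); last by move: JS; rewrite /jj; lia.
by rewrite (@row_seg_cons r.+1 c) // nb_cons; lia.
Qed.

(* A South step adds a row to the segment (and the row above holds no i
   left of p, as p has no West ribbon neighbour); a West step adds one box
   and moves the row-above boundary by one, paid by T p = j. *)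
Lemma ribbon_inv_step X p : ribbon_inv X p -> ribbon_inv X (ribbon_step la mu T i.+1 p).
Proof.
case: p => t d [/= Hr Hp Jp Hc]; have Hd : nth 0 mu t <= d <= nth 0 la t.
  by move: Hp; rewrite in_shapeE; lia.
case: ribbon_stepP; rewrite /=; [move=> HS JS | move=> _ Hd0 HW JW | by split].
- split=> //=; first lia.
  have HSr : d < nth 0 la t.+1 by move: HS; rewrite in_shapeE => /andP [].
  have Hwest : west_free (t, d).
    by move=> /= Hd0 HW; apply/negP => JW; apply: (no_jj_corner Hd0 Hp HS HW).
  have Hpj : T (t, d) <= i.*2.+2 by move: Jp; rewrite /jj; lia.
  rewrite (no_i_above (_ : 0 < t) Hp Hpj Hwest) in Hc; last by lia.
  rewrite !nb_segment_south // (nb_row_tail Ht HS (_ : i.*2 < _)).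
    by rewrite (@row_seg_cons t.+1 d) // nb_cons; lia.
  by move: JS; rewrite /jj; lia.
- have Tp : T (t, d) = i.*2.+2.
    have := row_mono Ht (leq_pred d) HW Hp.
    have := @primed_row_unique _ _ _ _ Ht t _ _ _ (odd_doubleS i) HW Hp.
    by move: Jp JW; rewrite /jj; lia.
  split=> //=; have HWr : d.-1 < nth 0 la t by move: HW; rewrite in_shapeE => /andP [].
  rewrite !nb_segment_west //; have := nb_row_seg_last T i.*2 t.-1 (nth 0 mu t.-1) d.
  by move: Hc JW; rewrite Tp /jj eqxx; case: eqP; case: eqP; lia.
Qed.

Lemma ribbon_inv_iter X p n : ribbon_inv X p -> ribbon_inv X (iter n (ribbon_step la mu T i.+1) p).
Proof. by move=> Hp; elim: n => //= n IH; apply: ribbon_inv_step. Qed.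

Lemma ribbon_step_decreasing p : ribbon_step la mu T i.+1 p != p ->
  size la - (ribbon_step la mu T i.+1 p).1 + (ribbon_step la mu T i.+1 p).2 < size la - p.1 + p.2.
Proof.
case: ribbon_stepP => /= [HS _ | _ Hd _ _ | _ _]; last by rewrite eqxx.
  by have := in_shape_size HS; lia.
by lia.
Qed.

Lemma ribbon_fixpoint p : ribbon_step la mu T i.+1 p = p -> south_free p /\ west_free p.
Proof.
case: p => a b; case: ribbon_stepP => //= [_ _ [] | _ Hd _ _ []]; lia.
Qed.

Hypothesis Hf : rightmost_free_i i la mu T = Some (r, c).

(* When S_x holds j or j', the ribbon starting there ends in a box q
   holding j' whose South neighbour is not j or j', and no j lies right of
   S_x in its row: the invariant at q, compared with [segment_balance],
   leaves no room for a j at q nor for X > 0. *)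
Lemma ribbon_end_spec : in_shape la mu (r.+1, c) -> jj (T (r.+1, c)) ->
  let q := ribbon_end la mu T i.+1 (r.+1, c) in
  [/\ in_shape la mu q, r < q.1, T q = i.*2.+1, south_free q &
      nb T i.*2.+2 (row_seg r.+1 c.+1 (nth 0 la r.+1)) = 0].
Proof.
move=> HS JS; rewrite /ribbon_end.
have Hbound : size la - (r.+1, c).1 + (r.+1, c).2 <= size la + head 0 la.
  have := la_mono Hsk (leq0n r.+1); move: HS; rewrite in_shapeE nth0 /=; lia.
have := @iter_fixpoint _ (ribbon_step la mu T i.+1) (fun p => size la - p.1 + p.2) _ _
          ribbon_step_decreasing Hbound.
have := ribbon_inv_iter (size la + head 0 la) (ribbon_inv_init HS JS).
set q := iter _ _ _ => -[Hq1 Hq Jq Hc] /ribbon_fixpoint [Hsouth Hwest] /=.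
clearbody q; case: q Hq1 Hq Jq Hc Hsouth Hwest => a b /= Hq1 Hq Jq Hc Hsouth Hwest.
have Hqj : T (a, b) <= i.*2.+2 by move: Jq; rewrite /jj; lia.
rewrite (no_i_above (_ : 0 < a) Hq Hqj Hwest) in Hc; last by lia.
have Hsize := in_shape_size Hq; have Hab := Hq; rewrite in_shapeE in Hab.
have Hbal : nb T i.*2.+2 (segment la mu r c a b) <= nb T i.*2 (segment la mu r c a b).
  by apply: (segment_balance Hf); lia.
split=> //; last by lia.
by move: Jq; rewrite /jj => /orP [/eqP // | /eqP Tj]; move: Hc; rewrite Tj eqxx; lia.
Qed.
End Ribbon.

Definition set_entry (T : pos -> nat) (z : pos) (v : nat) : pos -> nat :=
  fun p => if p == z then v else T p.

(* Raising the entry of a box z to v keeps a primed tableau primed provided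
   the entries right of and below z are at least v, no other box of its row
   holds v if v is primed, and no other box of its column holds v if v is
   unprimed (entries left of and above z are at most T z <= v anyway). *)
Lemma raise_tableau k la mu T r c v :
  primed_tableau k la mu T -> in_shape la mu (r, c) -> T (r, c) <= v <= uletter k ->
  (forall c', c < c' -> in_shape la mu (r, c') -> v <= T (r, c')) ->
  (forall r', r < r' -> in_shape la mu (r', c) -> v <= T (r', c)) ->
  (odd v -> forall c', c' != c -> in_shape la mu (r, c') -> T (r, c') != v) ->
  (~~ odd v -> forall r', r' != r -> in_shape la mu (r', c) -> T (r', c) != v) ->
  primed_tableau k la mu (set_entry T (r, c) v).
Proof.
move=> [Hbd Hrow Hcol Hpr Huc] Hz Hv Hright Hbelow Hprow Hucol; rewrite /set_entry; split.
- move=> p Hp; case: eqP => [Ep|_]; last exact: Hbd.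
  by have := Hbd _ Hz; lia.
- move=> t c1 c2 H12 H1 H2; rewrite !xpair_eqE.
  have [Et|_] := eqVneq t r; rewrite /=; last exact: Hrow; subst t.
  have [E1|N1] := eqVneq c1 c; have [E2|N2] := eqVneq c2 c; subst => //=.
  + by apply: Hright; rewrite // ltn_neqAle eq_sym N2.
  + by have := Hrow _ _ _ H12 H1 Hz; lia.
  + exact: Hrow.
- move=> r1 r2 c0 H12 H1 H2; rewrite !xpair_eqE.
  have [Ec|_] := eqVneq c0 c; rewrite /= ?andbF; last exact: Hcol; subst c0.
  have [E1|N1] := eqVneq r1 r; have [E2|N2] := eqVneq r2 r; subst => //=.
  + by apply: Hbelow; rewrite // ltn_neqAle eq_sym N2.
  + by have := Hcol _ _ _ H12 H1 Hz; lia.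
  + exact: Hcol.
- move=> t c1 c2 H1 H2; rewrite !xpair_eqE.
  have [Et|_] := eqVneq t r; rewrite /=; last exact: Hpr; subst t.
  have [E1|N1] := eqVneq c1 c; have [E2|N2] := eqVneq c2 c; subst => //= Ho E.
  + by have := Hprow Ho c2 N2 H2; rewrite -E eqxx.
  + by rewrite E in Ho; have := Hprow Ho c1 N1 H1; rewrite E eqxx.
  + exact: Hpr H1 H2 Ho E.
- move=> r1 r2 c0 H1 H2; rewrite !xpair_eqE.
  have [Ec|_] := eqVneq c0 c; rewrite /= ?andbF; last exact: Huc; subst c0.
  have [E1|N1] := eqVneq r1 r; have [E2|N2] := eqVneq r2 r; subst => //= Ho E.
  + by have := Hucol Ho r2 N2 H2; rewrite -E eqxx.
  + by rewrite E in Ho; have := Hucol Ho r1 N1 H1; rewrite E eqxx.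
  + exact: Huc H1 H2 Ho E.
Qed.

(* Raising a primed entry v' = 2m+1 to v = 2m+2 keeps a primed tableau
   primed if every entry below it is larger than v: entries right of it
   are already above v' (at most one v' per row). *)
Lemma raise_primed k la mu T r c m :
  primed_tableau k la mu T -> in_shape la mu (r, c) -> T (r, c) = m.*2.+1 ->
  m.*2.+2 <= uletter k ->
  (forall r', r < r' -> in_shape la mu (r', c) -> m.*2.+2 < T (r', c)) ->
  primed_tableau k la mu (set_entry T (r, c) m.*2.+2).
Proof.
move=> Ht Hq Tq Hk Hbelow; apply: raise_tableau => //.
- by rewrite Tq; lia.
- move=> c' Hc' Hs; have := row_mono Ht (ltnW Hc') Hq Hs.
  have := @primed_row_unique _ _ _ _ Ht r _ _ _ (odd_doubleS m) Hq Hs Tq; lia.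
- by move=> r' Hr' Hs; have := Hbelow r' Hr' Hs; lia.
- by rewrite /= odd_double.
- move=> _ r' Hr' Hs; case: (ltnP r' r) => H.
    by have := col_mono Ht (ltnW H) Hs Hq; apply/contraL => /eqP ->; lia.
  have Hrr : r < r' by rewrite ltn_neqAle eq_sym Hr' H.
  by have := Hbelow r' Hrr Hs; apply/contraL => /eqP ->; lia.
Qed.

Lemma cval_some la mu (T : pos -> nat) p v : cval la mu T p = Some v -> in_shape la mu p /\ T p = v.
Proof. by rewrite /cval; case: ifP => // ? [<-]. Qed.

Lemma cval_in la mu (T : pos -> nat) p : in_shape la mu p -> cval la mu T p = Some (T p).
Proof. by rewrite /cval => ->. Qed.

Lemma set_entry_ge T z v : T z <= v -> forall p, T p <= set_entry T z v p.
Proof. by move=> Hv p; rewrite /set_entry; case: eqP => [->|]. Qed.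

Lemma f_opE i la mu T x q : rightmost_free_i i la mu T = Some x ->
  choose_q i la mu T x = Some q -> f_op i la mu T = Some (Defs.bump (Defs.bump T x) q).
Proof. by rewrite /f_op => -> ->. Qed.

Lemma bump_bump_same (T : pos -> nat) x :
  Defs.bump (Defs.bump T x) x = set_entry T x (T x).+2.
Proof. by apply: functional_extensionality => z; rewrite /Defs.bump /set_entry eqxx; case: eqP. Qed.

Lemma bump_bump_other (T : pos -> nat) x q : q != x ->
  Defs.bump (Defs.bump T x) q = set_entry (set_entry T q (T q).+1) x (T x).+1.
Proof.
move=> Hqx; apply: functional_extensionality => z; rewrite /Defs.bump /set_entry (negbTE Hqx).
by case: eqP => [->|_]; rewrite ?(negbTE Hqx).
Qed.

Definition f_spec (k i : nat) (la mu : seq nat) (T : pos -> nat) (x : pos) : Prop :=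
  exists q, choose_q i la mu T x = Some q /\
  exists T', f_op i la mu T = Some T' /\
    ((q = x /\ T x = uletter i /\
      T' = (fun z => if z == x then uletter i.+1 else T z))
     \/
     (q <> x /\ in_shape la mu q /\ T x = uletter i /\ T q = pletter i.+1 /\
      T' = (fun z => if z == x then pletter i.+1
                     else if z == q then uletter i.+1 else T z))) /\
    primed_tableau k la mu T'.

Section Operator.
Variables (k : nat) (la mu : seq nat) (T : pos -> nat) (i r c : nat).
Hypotheses (Hsk : skew_shape la mu) (Ht : primed_tableau k la mu T).
Hypotheses (Hi1 : 1 <= i) (Hik : i <= k - 1) (Hf : rightmost_free_i i la mu T = Some (r, c)).

Lemma x_entry : T (r, c) = i.*2.
Proof. by have [] := rightmost_free_iP Hf. Qed.

Lemma x_in_shape : in_shape la mu (r, c).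
Proof. by have [_ []] := rightmost_free_iP Hf. Qed.

Lemma f_spec_stay : choose_q i la mu T (r, c) = Some (r, c) ->
  primed_tableau k la mu (set_entry T (r, c) i.*2.+2) -> f_spec k i la mu T (r, c).
Proof.
move=> Hq Hpr; exists (r, c); split=> //; exists (set_entry T (r, c) i.*2.+2).
rewrite (f_opE Hf Hq) bump_bump_same x_entry uletterS; split=> //; split=> //.
by left.
Qed.

Lemma f_spec_move q : choose_q i la mu T (r, c) = Some q -> q != (r, c) ->
  in_shape la mu q -> T q = i.*2.+1 ->
  primed_tableau k la mu (set_entry (set_entry T q i.*2.+2) (r, c) i.*2.+1) ->
  f_spec k i la mu T (r, c).
Proof.
move=> Hq Hqx Hqs Tq Hpr; exists q; split=> //.
exists (set_entry (set_entry T q i.*2.+2) (r, c) i.*2.+1).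
rewrite (f_opE Hf Hq) bump_bump_other // x_entry Tq uletterS pletterS; split=> //; split=> //.
by right; split=> //; apply/eqP.
Qed.

Lemma j_le_k : i.*2.+2 <= uletter k.
Proof. by rewrite /uletter; lia. Qed.

(* Entries right of x are at least j', since the box East of x is not i. *)
Lemma right_of_x_ge c' : c < c' -> in_shape la mu (r, c') -> i.*2.+1 <= T (r, c').
Proof.
move=> Hc' Hs; have HE : in_shape la mu (r, c.+1) by apply: (in_shape_row x_in_shape Hs); lia.
have := east_of_free_not_i Hf HE; have := row_mono Ht (leqnSn c) x_in_shape HE.
by have := row_mono Ht Hc' HE Hs; rewrite x_entry /uletter; lia.
Qed.

Lemma right_of_x_ge_j : cval la mu T (r, c.+1) != Some i.*2.+1 ->
  forall c', c < c' -> in_shape la mu (r, c') -> i.*2.+2 <= T (r, c').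
Proof.
move=> HE c' Hc' Hs; have HEs : in_shape la mu (r, c.+1).
  by apply: (in_shape_row x_in_shape Hs); lia.
have := right_of_x_ge (ltnSn c) HEs; have := row_mono Ht Hc' HEs Hs.
have : T (r, c.+1) != i.*2.+1 by move: HE; rewrite cval_in //; apply: contra => /eqP ->.
lia.
Qed.

Lemma east_cge : cval la mu T (r, c.+1) != Some i.*2.+1 ->
  cge (cval la mu T (r, c.+1)) (uletter i.+1).
Proof. by move=> HE; rewrite /cval; case: ifP => //= Hs; rewrite uletterS (right_of_x_ge_j HE). Qed.

Lemma below_x_gt r' : r < r' -> in_shape la mu (r', c) -> i.*2 < T (r', c).
Proof.
move=> Hr Hs; have := col_mono Ht (ltnW Hr) x_in_shape Hs.
have := @unprimed_col_unique _ _ _ _ Ht r r' c _ (even_double i) x_in_shape Hs x_entry.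
by rewrite x_entry; lia.
Qed.

Lemma raise_x_after q : q != (r, c) -> T q <= i.*2.+2 ->
  primed_tableau k la mu (set_entry T q i.*2.+2) ->
  (forall c', c < c' -> in_shape la mu (r, c') -> (r, c') != q -> T (r, c') != i.*2.+1) ->
  primed_tableau k la mu (set_entry (set_entry T q i.*2.+2) (r, c) i.*2.+1).
Proof.
move=> Hqx Hq Ht1 Hright; have HT1 := set_entry_ge Hq.
have T1x : set_entry T q i.*2.+2 (r, c) = i.*2 by rewrite /set_entry eq_sym (negbTE Hqx) x_entry.
apply: raise_tableau x_in_shape _ _ _ _ _ => //.
- by rewrite T1x; have := j_le_k; lia.
- by move=> c' Hc' Hs; have := HT1 (r, c'); have := right_of_x_ge Hc' Hs; lia.
- by move=> r' Hr' Hs; have := HT1 (r', c); have := below_x_gt Hr' Hs; lia.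
- move=> _ c' Hc' Hs; rewrite /set_entry; case: ifP => [_|/negbT Nq]; first by rewrite gtn_eqF.
  case: (ltnP c' c) => H; last by apply: Hright; rewrite // ltn_neqAle eq_sym Hc' H.
  by have := row_mono Ht (ltnW H) Hs x_in_shape; rewrite x_entry; apply/contraL => /eqP ->; lia.
- by rewrite /= odd_double.
Qed.

(* In case (F2), the entry below E_x exceeds j: a j' there would give two
   j' in row r+1, and a j would be a j right of S_x, excluded by
   [ribbon_end_spec]. *)
Lemma below_east_gt_j : in_shape la mu (r, c.+1) -> T (r, c.+1) = i.*2.+1 ->
  forall r', r < r' -> in_shape la mu (r', c.+1) -> i.*2.+2 < T (r', c.+1).
Proof.
move=> HEs TE r' Hr' Hs.
have HSE : in_shape la mu (r.+1, c.+1) by apply: (in_shape_col Hsk HEs Hs); lia.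
have HS : in_shape la mu (r.+1, c) by apply: (in_shape_below Hsk x_in_shape HSE); lia.
have := col_mono Ht Hr' HSE Hs; suff : i.*2.+2 < T (r.+1, c.+1) by lia.
have Hgt := below_x_gt (ltnSn r) HS; have Hrow := row_mono Ht (leqnSn c) HS HSE.
have Hcol := col_mono Ht (leqnSn r) HEs HSE; rewrite TE in Hcol.
have Hpr := @primed_row_unique _ _ _ _ Ht r.+1 _ _ _ (odd_doubleS i) HS HSE.
have [Tj|] := eqVneq (T (r.+1, c.+1)) i.*2.+2; last by lia.
have JS : jj i (T (r.+1, c)) by rewrite /jj; lia.
have [_ _ _ _] := ribbon_end_spec Hsk Ht Hf HS JS.
have HSr : c.+1 < nth 0 la r.+1 by move: HSE; rewrite in_shapeE => /andP [].
by rewrite (@row_seg_cons r.+1 c.+1) // nb_cons Tj eqxx.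
Qed.

Lemma f_spec_F2 : cval la mu T (r, c.+1) = Some i.*2.+1 -> f_spec k i la mu T (r, c).
Proof.
move=> HE; have [HEs TE] := cval_some HE.
have Hq : choose_q i la mu T (r, c) = Some (r, c.+1) by rewrite /choose_q /= HE pletterS eqxx.
apply: (f_spec_move Hq _ HEs TE); first by apply/eqP; case; lia.
apply: raise_x_after; first by apply/eqP; case; lia.
- by rewrite TE.
- exact: raise_primed Ht HEs TE j_le_k (below_east_gt_j HEs TE).
- move=> c' Hc' Hs /eqP Nq; apply/eqP => Tc'; apply: Nq; congr (_, _).
  exact/esym/(primed_row_unique Ht (odd_doubleS i) HEs Hs TE Tc').
Qed.

Lemma f_spec_F3 : cval la mu T (r, c.+1) != Some i.*2.+1 ->
  is_jj i.+1 (cval la mu T (r.+1, c)) -> f_spec k i la mu T (r, c).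
Proof.
move=> HE HS; have Hq : choose_q i la mu T (r, c) = Some (ribbon_end la mu T i.+1 (r.+1, c)).
  by rewrite /choose_q /= (negbTE HE) east_cge ?HS.
move: HS; rewrite is_jjE => /andP [HSs JS].
have := ribbon_end_spec Hsk Ht Hf HSs JS.
move: Hq; set q := ribbon_end _ _ _ _ _; clearbody q; case: q => a b Hq /= [Hqs Hra Tq Hsouth _].
apply: (f_spec_move Hq _ Hqs Tq); first by apply/eqP; case; lia.
apply: raise_x_after; first by apply/eqP; case; lia.
- by rewrite Tq.
- apply: (raise_primed Ht Hqs Tq j_le_k) => r' Hr' Hs.
  have HSq : in_shape la mu (a.+1, b) by apply: (in_shape_col Hsk Hqs Hs); lia.
  have := Hsouth HSq; have := col_mono Ht (leqnSn a) Hqs HSq.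
  by have := col_mono Ht Hr' HSq Hs; rewrite /= /jj Tq; lia.
- by move=> c' Hc' Hs _; have := right_of_x_ge_j HE Hc' Hs; apply/contraL => /eqP ->; lia.
Qed.

Lemma f_spec_F1 : cval la mu T (r, c.+1) != Some i.*2.+1 ->
  ~~ is_jj i.+1 (cval la mu T (r.+1, c)) -> f_spec k i la mu T (r, c).
Proof.
move=> HE HS; have Hbelow r' : r < r' -> in_shape la mu (r', c) -> i.*2.+2 < T (r', c).
  move=> Hr' Hs; have HSs : in_shape la mu (r.+1, c).
    by apply: (in_shape_col Hsk x_in_shape Hs); lia.
  have := below_x_gt (ltnSn r) HSs; have := col_mono Ht Hr' HSs Hs.
  by move: HS; rewrite is_jjE HSs /jj /=; lia.
have HSc : cgt (cval la mu T (r.+1, c)) (uletter i.+1).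
  by rewrite /cval; case: ifP => //= Hs; rewrite uletterS Hbelow.
have Hq : choose_q i la mu T (r, c) = Some (r, c).
  by rewrite /choose_q /= (negbTE HE) east_cge // (negbTE HS) HSc.
apply: (f_spec_stay Hq); apply: raise_tableau x_in_shape _ _ _ _ _ => //.
- by rewrite x_entry; have := j_le_k; lia.
- exact: right_of_x_ge_j HE.
- by move=> r' Hr' Hs; have := Hbelow r' Hr' Hs; lia.
- by rewrite /= odd_double.
- move=> _ r' Hr' Hs; case: (ltnP r' r) => H.
    by have := col_mono Ht (ltnW H) Hs x_in_shape; rewrite x_entry; apply/contraL => /eqP ->; lia.
  have Hrr : r < r' by rewrite ltn_neqAle eq_sym Hr' H.
  by have := Hbelow r' Hrr Hs; apply/contraL => /eqP ->; lia.
Qed.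

End Operator.

Unset Implicit Arguments.

Theorem lemma3p2 (k : nat) (la mu : seq nat) (T : pos -> nat) (i : nat) (x : pos) :
  skew_shape la mu ->
  primed_tableau k la mu T ->
  1 <= i -> i <= k - 1 ->
  (* f_i(T) <> 0, x being the box of the rightmost unbracketed i *)
  rightmost_free_i i la mu T = Some x ->
  exists q, choose_q i la mu T x = Some q /\
  exists T', f_op i la mu T = Some T' /\
    ((q = x /\ T x = uletter i /\
      T' = (fun z => if z == x then uletter i.+1 else T z))
     \/
     (q <> x /\ in_shape la mu q /\ T x = uletter i /\ T q = pletter i.+1 /\
      T' = (fun z => if z == x then pletter i.+1
                     else if z == q then uletter i.+1 else T z))) /\
    primed_tableau k la mu T'.
Proof.
move=> Hsk Ht Hi1 Hik; case: x => r c Hf.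
have [HE|HE] := eqVneq (cval la mu T (r, c.+1)) (Some i.*2.+1).
  exact: f_spec_F2 Hsk Ht Hi1 Hik Hf HE.
have [HS|HS] := boolP (is_jj i.+1 (cval la mu T (r.+1, c))).
  exact: f_spec_F3 Hsk Ht Hi1 Hik Hf HE HS.
exact: f_spec_F1 Hsk Ht Hi1 Hik Hf HE HS.
Qed.
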